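(* Let $(W_1,w_2,\lambda)$ be a KKT point (in terms of the B-subdifferential) of the non-convex max-margin problem $\min\frac12(\|W_1\|_F^2+\|w_2\|_2^2)$ s.t. $Y(XW_1)_+w_2\ge\mathbf1$. Then $(W_1,w_2,\lambda)$ yields a KKT point of the convex problem (i.e., there exist $u_j,u'_j\in\mathbb R^d$, $j\in[p]$, with $\sum_jD_jX(u'_j-u_j)=(XW_1)_+w_2$, and $z_j,z'_j\in\mathbb R^N$, which together with $\lambda$ satisfy the convex KKT conditions in the context) if and only if $\lambda$ is dual feasible: $$\max_{u:\|u\|_2\le1}|\lambda^T(Xu)_+|\le1.$$ Moreover, this dual feasibility condition is equivalent to: for every $D_j\in\mathcal P$, $$\max_{\|u\|_2\le1,\ (2D_j-I)Xu\ge0}|\lambda^TD_jXu|\le1.$$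
   Context: Binary setting: $X\in\mathbb R^{N\times d}$ rows $x_n$, $y\in\{\pm1\}^N$, $Y=\mathrm{diag}(y)$, network output $(XW_1)_+w_2$, $\mathcal P=\{\mathrm{diag}(\mathbb I(Xw\ge0)):w\in\mathbb R^d\}=\{D_1,\dots,D_p\}$. KKT point of the non-convex problem (B-subdifferential): $Y\lambda\ge0$, $Y(XW_1)_+w_2\ge\mathbf 1$, $\lambda_n(y_n(x_n^TW_1)_+w_2-1)=0$, $w_2=(XW_1)_+^T\lambda$, and for each $i$, $w_{1,i}=w_{2,i}\sum_n\lambda_ng_{n,i}x_n$ with $g_{n,i}=1$ if $x_n^Tw_{1,i}>0$, $0$ if $<0$, $\in\{0,1\}$ if $=0$. Convex problem: $\min\sum_{j=1}^p(\|u_j\|_2+\|u'_j\|_2)$ s.t. $Y\sum_jD_jX(u'_j-u_j)\ge\mathbf1$, $(2D_j-I)Xu_j\ge0$, $(2D_j-I)Xu'_j\ge0$. Its KKT conditions, with multipliers $\lambda$ ($Y\lambda\ge0$) and $z_j,z'_j\ge0$: primal feasibility; $X^TD_j\lambda+X^T(2D_j-I)z'_j\in\partial\|u'_j\|_2$ and $-X^TD_j\lambda+X^T(2D_j-I)z_j\in\partial\|u_j\|_2$ for all $j$; $\lambda_n\big(y_n(\sum_jD_jX(u'_j-u_j))_n-1\big)=0$; $z_{j,n}((2D_j-I)Xu_j)_n=0$ and $z'_{j,n}((2D_j-I)Xu'_j)_n=0$ for all $j,n$. *)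

From HB Require Import structures.
From mathcomp Require Import all_boot all_order all_algebra.
From mathcomp Require Import reals.
Set Implicit Arguments. Unset Strict Implicit. Unset Printing Implicit Defensive.
Import Order.TTheory GRing.Theory Num.Theory.
Local Open Scope ring_scope.

Section Defs.
Context {R : realType}.

Definition norm2 (n : nat) (v : 'cV[R]_n) : R := Num.sqrt (\sum_i v i 0 ^+ 2).

Definition subdiff (n : nat) (f : 'cV[R]_n -> R) (u g : 'cV[R]_n) : Prop :=
  forall v : 'cV[R]_n, f u + (g^T *m (v - u)) 0 0 <= f v.

Definition relu (a b : nat) (A : 'M[R]_(a, b)) : 'M[R]_(a, b) :=
  map_mx (fun x => Num.max x 0) A.

Definition mge0 (a b : nat) (A : 'M[R]_(a, b)) : Prop := forall i j, 0 <= A i j.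
Definition cge1 (a : nat) (v : 'cV[R]_a) : Prop := forall i, 1 <= v i 0.

Definition Dmx (N : nat) (D : {set 'I_N}) : 'M[R]_N :=
  diag_mx (\row_n (if n \in D then 1 else 0)).

Definition Ymx (N : nat) (y : 'cV[R]_N) : 'M[R]_N := diag_mx y^T.

(* activation pattern diag(1(Xw >= 0)), as an index set *)
Definition pattern (N d : nat) (X : 'M[R]_(N, d)) (w : 'cV[R]_d) : {set 'I_N} :=
  [set n | 0 <= (X *m w) n 0].

(* KKT point (B-subdifferential) of the non-convex max-margin problem
   min 1/2(|W1|_F^2 + |w2|^2) s.t. Y (X W1)_+ w2 >= 1 *)
Definition nonconvex_KKT (N d m : nat) (X : 'M[R]_(N, d)) (y : 'cV[R]_N)
    (W1 : 'M[R]_(d, m)) (w2 : 'cV[R]_m) (lam : 'cV[R]_N) : Prop :=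
  [/\ mge0 (Ymx y *m lam),
      cge1 (Ymx y *m (relu (X *m W1) *m w2)),
      (forall n, lam n 0 * ((Ymx y *m (relu (X *m W1) *m w2)) n 0 - 1) = 0),
      w2 = (relu (X *m W1))^T *m lam &
      exists g : 'I_N -> 'I_m -> R,
        (forall n i, [/\ g n i = 0 \/ g n i = 1,
                         0 < (X *m W1) n i -> g n i = 1 &
                         (X *m W1) n i < 0 -> g n i = 0]) /\
        (forall i, col i W1 = w2 i 0 *: \sum_n (lam n 0 * g n i) *: (row n X)^T)].

(* KKT conditions of the convex problem
   min sum_j (|u_j| + |u'_j|) s.t. Y sum_j D_j X (u'_j - u_j) >= 1,
   (2D_j - I) X u_j >= 0, (2D_j - I) X u'_j >= 0,
   with P = {D_1, ..., D_p} given by Ds. *)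
Definition convex_KKT (N d p : nat) (X : 'M[R]_(N, d)) (y : 'cV[R]_N)
    (Ds : 'I_p -> {set 'I_N}) (lam : 'cV[R]_N)
    (u u' : 'I_p -> 'cV[R]_d) (z z' : 'I_p -> 'cV[R]_N) : Prop :=
  let out := \sum_(j < p) Dmx (Ds j) *m X *m (u' j - u j) in
  let S j := 2%:R *: Dmx (Ds j) - 1%:M in
  [/\
      cge1 (Ymx y *m out),
      (forall j, mge0 (S j *m X *m u j)),
      (forall j, mge0 (S j *m X *m u' j)),
      mge0 (Ymx y *m lam) &
      (forall j, mge0 (z j) /\ mge0 (z' j))] /\
  [/\
      (forall j, subdiff (@norm2 d) (u' j)
                   (X^T *m Dmx (Ds j) *m lam + X^T *m S j *m z' j)),
      (forall j, subdiff (@norm2 d) (u j)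
                   (- (X^T *m Dmx (Ds j) *m lam) + X^T *m S j *m z j)),
      (forall n, lam n 0 * ((Ymx y *m out) n 0 - 1) = 0) &
      (forall j n, z j n 0 * (S j *m X *m u j) n 0 = 0
                   /\ z' j n 0 * (S j *m X *m u' j) n 0 = 0)].

Definition dual_feasible (N d : nat) (X : 'M[R]_(N, d)) (lam : 'cV[R]_N) : Prop :=
  forall u : 'cV[R]_d, norm2 u <= 1 -> `|(lam^T *m relu (X *m u)) 0 0| <= 1.

Definition dual_feasible_patterns (N d p : nat) (X : 'M[R]_(N, d))
    (Ds : 'I_p -> {set 'I_N}) (lam : 'cV[R]_N) : Prop :=
  forall j (u : 'cV[R]_d), norm2 u <= 1 ->
    mge0 ((2%:R *: Dmx (Ds j) - 1%:M) *m X *m u) ->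
    `|(lam^T *m Dmx (Ds j) *m X *m u) 0 0| <= 1.

End Defs.

From HB Require Import structures.
From mathcomp Require Import all_boot all_order all_algebra.
From mathcomp Require Import reals.
From mathcomp Require Import ring lra.
Import Order.TTheory GRing.Theory Num.Theory.
Local Open Scope ring_scope.
Set Implicit Arguments. Unset Strict Implicit. Unset Printing Implicit Defensive.

(* Testing dual feasibility of [lam] on the whole unit ball or separately on
   each cone [(2D - I) X u >= 0] is the same: on that cone [(X u)_+ = D X u],
   and every [u] lies in the cone of its own activation pattern.  The convex
   stationarity conditions bound [lam^T D X u] by [|u|] on each such cone.
   Conversely, at a KKT point of the non-convex problem each neuron satisfies
   [|w1_i| = |w2_i|] and [lam^T D X w1_i = w2_i] for its pattern [D]; grouping
   neurons by pattern and by the sign of [w2_i] gives [u_j], [u'_j] at which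
   [-/+ lam^T D_j X] attains the norm.  The multipliers [z_j], [z'_j] come from
   conic duality: a linear form bounded by the norm on [{u | A u >= 0}] differs
   from a vector of norm at most 1 by a nonnegative combination of rows of [A].
   This follows from Farkas' lemma and the Euclidean projection onto a
   polyhedral cone, both obtained by induction on the number of constraints. *)

Section EuclideanSpace.
Variables (R : realType) (n : nat).
Implicit Types (u v w : 'cV[R]_n).

Definition dot u v : R := \sum_i u i 0 * v i 0.

Lemma dotC u v : dot u v = dot v u.
Proof. by apply: eq_bigr => i _; rewrite mulrC. Qed.

Lemma dotDl u v w : dot (u + v) w = dot u w + dot v w.
Proof. by rewrite /dot -big_split; apply: eq_bigr => i _; rewrite !mxE mulrDl. Qed.

Lemma dotZl k u v : dot (k *: u) v = k * dot u v.
Proof. by rewrite /dot mulr_sumr; apply: eq_bigr => i _; rewrite !mxE mulrA. Qed.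

Lemma dotNl u v : dot (- u) v = - dot u v.
Proof. by rewrite -scaleN1r dotZl mulN1r. Qed.

Lemma dotBl u v w : dot (u - v) w = dot u w - dot v w.
Proof. by rewrite dotDl dotNl. Qed.

Lemma dot0l v : dot 0 v = 0.
Proof. by rewrite -(scale0r 0) dotZl mul0r. Qed.

Lemma dotDr u v w : dot w (u + v) = dot w u + dot w v.
Proof. by rewrite dotC dotDl !(dotC w). Qed.

Lemma dotZr k u v : dot v (k *: u) = k * dot v u.
Proof. by rewrite dotC dotZl dotC. Qed.

Lemma dotNr u v : dot v (- u) = - dot v u.
Proof. by rewrite dotC dotNl dotC. Qed.

Lemma dotBr u v w : dot w (u - v) = dot w u - dot w v.
Proof. by rewrite dotDr dotNr. Qed.

Lemma dot0r v : dot v 0 = 0.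
Proof. by rewrite dotC dot0l. Qed.

Lemma dot_suml (I : Type) (r : seq I) (P : pred I) (F : I -> 'cV[R]_n) v :
  dot (\sum_(i <- r | P i) F i) v = \sum_(i <- r | P i) dot (F i) v.
Proof. by apply: (big_morph (dot^~ v)); [move=> a b; rewrite dotDl | rewrite dot0l]. Qed.

Lemma dotvv_ge0 v : 0 <= dot v v.
Proof. by apply: sumr_ge0 => i _; rewrite -expr2 sqr_ge0. Qed.

Lemma dotvv_eq0 v : (dot v v == 0) = (v == 0).
Proof.
apply/eqP/eqP => [v0|->]; last exact: dot0l.
apply/matrixP => i j; rewrite (ord1 j) mxE.
have sq_ge0 k : true -> 0 <= v k 0 * v k 0 by rewrite -expr2 sqr_ge0.
by have /eqP := psumr_eq0P sq_ge0 v0 (i := i) isT; rewrite mulf_eq0 orbb => /eqP.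
Qed.

Lemma dotvv_gt0 v : v != 0 -> 0 < dot v v.
Proof. by rewrite lt_def dotvv_eq0 dotvv_ge0 andbT. Qed.

Lemma dot_comb x y u v :
  dot (x *: u + y *: v) (x *: u + y *: v) =
  x ^+ 2 * dot u u + 2 * x * y * dot u v + y ^+ 2 * dot v v.
Proof. rewrite !(dotDl, dotDr, dotZl, dotZr) (dotC v u); ring. Qed.

Lemma trmx_mul_dot u v : (u^T *m v) 0 0 = dot u v.
Proof. by rewrite mxE; apply: eq_bigr => i _; rewrite mxE. Qed.

Lemma norm2E v : norm2 v = Num.sqrt (dot v v).
Proof. by congr Num.sqrt; apply: eq_bigr => i _; rewrite expr2. Qed.

Lemma norm2_ge0 v : 0 <= norm2 v.
Proof. exact: sqrtr_ge0. Qed.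

Lemma sqr_norm2 v : norm2 v ^+ 2 = dot v v.
Proof. by rewrite norm2E sqr_sqrtr // dotvv_ge0. Qed.

Lemma norm2_0 : norm2 (0 : 'cV[R]_n) = 0.
Proof. by rewrite norm2E dot0l sqrtr0. Qed.

Lemma norm2_eq0 v : (norm2 v == 0) = (v == 0).
Proof. by rewrite -dotvv_eq0 -sqr_norm2 sqrf_eq0. Qed.

Lemma norm2Z k v : norm2 (k *: v) = `|k| * norm2 v.
Proof. by rewrite !norm2E dotZl dotZr mulrA -expr2 sqrtrM ?sqr_ge0 // sqrtr_sqr. Qed.

Lemma dot_sqr_le u v : dot u v ^+ 2 <= dot u u * dot v v.
Proof.
have [->|v0] := eqVneq v 0; first by rewrite !dot0r expr0n mulr0.
have vv_gt0 := dotvv_gt0 v0.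
have := dotvv_ge0 (dot v v *: u + (- dot u v) *: v); rewrite dot_comb => h.
have : 0 <= dot v v * (dot u u * dot v v - dot u v ^+ 2) by nra.
by rewrite pmulr_rge0 // subr_ge0.
Qed.

Lemma dot_le_norm2 u v : dot u v <= norm2 u * norm2 v.
Proof.
rewrite !norm2E -sqrtrM ?dotvv_ge0 //; apply: le_trans (ler_norm _) _.
by rewrite -sqrtr_sqr ler_sqrt ?dot_sqr_le // mulr_ge0 ?dotvv_ge0.
Qed.

Lemma norm2D u v : norm2 (u + v) <= norm2 u + norm2 v.
Proof.
have uv_ge0 := addr_ge0 (norm2_ge0 u) (norm2_ge0 v).
rewrite -(ger0_norm uv_ge0) -[leRHS]sqrtr_sqr norm2E ler_sqrt ?sqr_ge0 //.
rewrite dotDl !dotDr (dotC v u) sqrrD !sqr_norm2.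
have := dot_le_norm2 u v; lra.
Qed.

Lemma norm2_sum (I : Type) (r : seq I) (P : pred I) (F : I -> 'cV[R]_n) :
  norm2 (\sum_(i <- r | P i) F i) <= \sum_(i <- r | P i) norm2 (F i).
Proof.
apply: (big_ind2 (fun x y => norm2 x <= y)) => //; first by rewrite norm2_0.
by move=> x1 x2 y1 y2 h1 h2; apply: le_trans (norm2D _ _) (lerD h1 h2).
Qed.

Lemma dot_sum_eq_norm2 (I : Type) (r : seq I) (P : pred I) (F : I -> 'cV[R]_n) c :
  dot c (\sum_(i <- r | P i) F i) <= norm2 (\sum_(i <- r | P i) F i) ->
  (forall i, P i -> dot c (F i) = norm2 (F i)) ->
  dot c (\sum_(i <- r | P i) F i) = norm2 (\sum_(i <- r | P i) F i).
Proof.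
move=> le_c eq_c; apply/le_anti; rewrite le_c /= dotC dot_suml.
rewrite (eq_bigr (fun i => norm2 (F i))) ?norm2_sum // => i Pi.
by rewrite dotC eq_c.
Qed.

Lemma subdiff_norm2_le u g : subdiff (@norm2 R n) u g -> forall v, dot g v <= norm2 v.
Proof.
move=> g_sub v; have := g_sub (u + v).
rewrite trmx_mul_dot (addrC u v) addrK; have := norm2D v u; lra.
Qed.

Lemma subdiff_norm2 u g : norm2 g <= 1 -> dot g u = norm2 u -> subdiff (@norm2 R n) u g.
Proof.
move=> g_le1 gu v; rewrite trmx_mul_dot dotBr gu addrC subrK.
by apply: le_trans (dot_le_norm2 _ _) _; rewrite ler_piMl ?norm2_ge0.
Qed.

End EuclideanSpace.

Section FiniteCones.
Variables (R : realType) (n : nat).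
Implicit Types (s : seq 'cV[R]_n) (a b c v w x : 'cV[R]_n).

Definition dual_cone s v := forall a, a \in s -> 0 <= dot a v.

Fixpoint conic_hull s b : Prop :=
  if s is a :: s' then exists2 t : R, 0 <= t & conic_hull s' (b - t *: a) else b = 0.

Lemma dual_cone_cons a s v : dual_cone (a :: s) v <-> 0 <= dot a v /\ dual_cone s v.
Proof.
split => [Kv|[av Kv] x]; last by rewrite in_cons => /orP[/eqP->|/Kv].
by split=> [|x xs]; apply: Kv; rewrite in_cons ?eqxx ?xs ?orbT.
Qed.

Lemma dual_coneD s v w : dual_cone s v -> dual_cone s w -> dual_cone s (v + w).
Proof. by move=> Kv Kw a sa; rewrite dotDr addr_ge0 ?Kv ?Kw. Qed.

Lemma dual_coneZ s k v : 0 <= k -> dual_cone s v -> dual_cone s (k *: v).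
Proof. by move=> k_ge0 Kv a sa; rewrite dotZr mulr_ge0 ?Kv. Qed.

Lemma conic_hull_dot_ge0 s x v : conic_hull s x -> dual_cone s v -> 0 <= dot x v.
Proof.
elim: s x => [|a s IH] x /=; first by move=> ->; rewrite dot0l.
case=> t t_ge0 /IH hull /dual_cone_cons[av /hull].
by rewrite dotBl dotZl subr_ge0; apply: le_trans; rewrite mulr_ge0.
Qed.

Lemma conic_hull_map (f : 'cV[R]_n -> 'cV[R]_n) s y :
  f 0 = 0 -> (forall x t a, f (x + t *: a) = f x + t *: f a) ->
  conic_hull (map f s) y -> exists2 x, conic_hull s x & y = f x.
Proof.
move=> f0 f_lin; elim: s y => [|a s IH] y /=; first by move=> ->; exists 0.
case=> t t_ge0 /IH[x hull_x fx]; exists (x + t *: a); last by rewrite f_lin -fx subrK.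
by exists t; rewrite ?addrK.
Qed.

Definition proj_along a v x := x - (dot x v / dot a v) *: a.

Lemma proj_along_orth a v x : dot a v != 0 -> dot (proj_along a v x) v = 0.
Proof. by move=> av0; rewrite dotBl dotZl mulfVK // subrr. Qed.

Lemma proj_along_id a v x : dot x v = 0 -> proj_along a v x = x.
Proof. by move=> xv0; rewrite /proj_along xv0 mul0r scale0r subr0. Qed.

Lemma proj_along0 a v : proj_along a v 0 = 0.
Proof. by rewrite proj_along_id ?dot0l. Qed.

Lemma proj_alongDZ a v x t y :
  proj_along a v (x + t *: y) = proj_along a v x + t *: proj_along a v y.
Proof.
rewrite /proj_along dotDl dotZl scalerBr scalerA !mulrDl -!mulrA scalerDl.
by rewrite opprD addrACA.
Qed.

Lemma dot_proj_along a v x w : dot (proj_along a v x) w = dot x (proj_along v a w).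
Proof. by rewrite dotBl dotBr dotZl dotZr (dotC v a) (dotC a w); congr (_ - _); ring. Qed.

(* When [v] separates [b] from the hull of [s] but not from that of [a :: s],
   project [b] and [s] onto [v^⊥] along [a] and recurse. *)
Lemma farkas_alternative s b :
  conic_hull s b \/ exists v, dual_cone s v /\ dot b v < 0.
Proof.
move Hk : (size s) => k; elim: k s Hk b => [|k IH] [|a s] //= => [_|[Hk]] b.
  have [->|b0] := eqVneq b 0; [by left | right; exists (- b)].
  by rewrite dotNr oppr_lt0 dotvv_gt0.
have [b_hull|[v [Kv bv]]] := IH s Hk b; first by left; exists 0; rewrite ?scale0r ?subr0.
have [av|av] := lerP 0 (dot a v); first by right; exists v; split => //; apply/dual_cone_cons.
have av0 : dot a v != 0 by rewrite ltr0_neq0.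
pose f := proj_along a v.
case: (IH (map f s) (etrans (size_map _ _) Hk) (f b)) => [fb_hull|[w [Kw fbw]]].
  left; have [x hull_x fbx] := conic_hull_map (proj_along0 a v) (@proj_alongDZ a v) fb_hull.
  have xv := conic_hull_dot_ge0 hull_x Kv.
  exists ((dot b v - dot x v) / dot a v); first by rewrite ler_ndivlMr // mul0r; lra.
  rewrite (_ : b - _ = x) //.
  by move: fbx; rewrite /f /proj_along mulrBl scalerBl opprB addrCA addrC => ->; rewrite subrK.
right; exists (proj_along v a w); split; last by rewrite -dot_proj_along.
apply/dual_cone_cons; split; first by rewrite dotC proj_along_orth // dotC.
by move=> x sx; rewrite -dot_proj_along; apply: Kw; apply: map_f.
Qed.

Lemma farkas s b : (forall v, dual_cone s v -> 0 <= dot b v) -> conic_hull s b.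
Proof.
move=> b_dual; have [//|[v [Kv bv]]] := farkas_alternative s b.
by have := b_dual v Kv; lra.
Qed.

End FiniteCones.

Section ConeProjection.
Variables (R : realType) (n : nat).
Implicit Types (s : seq 'cV[R]_n) (a c e p q x y : 'cV[R]_n).

Definition sqdist c x := dot (c - x) (c - x).

Lemma sqdistC c x : sqdist c x = sqdist x c.
Proof. by rewrite /sqdist -opprB dotNl dotNr opprK. Qed.

Lemma sqdist_convex c x y t : 0 <= t <= 1 ->
  sqdist c ((1 - t) *: x + t *: y) <= (1 - t) * sqdist c x + t * sqdist c y.
Proof.
case/andP=> t_ge0 t_le1; rewrite /sqdist.
have -> : c - ((1 - t) *: x + t *: y) = (1 - t) *: (c - x) + t *: (c - y).
  by rewrite !scalerBr opprD addrACA -scalerDl subrK scale1r.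
move: (c - x) (c - y) => q r; rewrite dot_comb.
have := dotvv_ge0 (q - r); rewrite dotBl !dotBr [dot r q]dotC => qr_ge0.
have : 0 <= t * (1 - t) * (dot q q - dot q r - (dot q r - dot r r)).
  by rewrite mulr_ge0 // mulr_ge0 // subr_ge0.
lra.
Qed.

Lemma sqdist_proj_orth c y a : a != 0 -> dot y a = 0 ->
  sqdist c y = sqdist (proj_along a a c) y + dot c a ^+ 2 / dot a a.
Proof.
move=> a0 ya0; have aa0 : dot a a != 0 by rewrite dotvv_eq0.
rewrite /sqdist; have -> : c - y = (proj_along a a c - y) + (dot c a / dot a a) *: a.
  by rewrite /proj_along addrAC subrK.
have Pya0 : dot (proj_along a a c - y) a = 0 by rewrite dotBl proj_along_orth // ya0 subrr.
move: (proj_along a a c - y) Pya0 => w wa0.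
rewrite dotDl !dotDr !dotZl !dotZr (dotC a) wa0; field; exact: aa0.
Qed.

Lemma projection_dot_le0 c p e :
  (forall t, 0 <= t <= 1 -> sqdist c p <= sqdist c (p + t *: e)) -> dot (c - p) e <= 0.
Proof.
move=> p_min; rewrite leNgt; apply/negP => qe_gt0.
have ee_ge0 := dotvv_ge0 e.
set q := c - p in qe_gt0; set t := dot q e / (dot q e + dot e e).
have den_gt0 : 0 < dot q e + dot e e by lra.
have t_gt0 : 0 < t by rewrite divr_gt0.
have t_le1 : t <= 1 by rewrite ler_pdivrMr // mul1r lerDl.
have tE : t * (dot q e + dot e e) = dot q e by rewrite divfK ?gt_eqF.
have := p_min t; rewrite ltW // t_le1 => /(_ isT); rewrite /sqdist.
have -> : c - (p + t *: e) = 1 *: q + (- t) *: e by rewrite scale1r scaleNr opprD addrA.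
rewrite dot_comb -/q; have := mulr_gt0 t_gt0 qe_gt0; nra.
Qed.

(* When the nearest point [p] for [s] violates [a], the nearest point for
   [a :: s] is sought on [a^⊥], where the problem reduces to [map P s]: any
   feasible [x] is no closer to [c] than the point of the segment [[x, p]]
   lying on [a^⊥]. *)
Lemma exists_projection s c :
  exists2 p, dual_cone s p & forall x, dual_cone s x -> sqdist c p <= sqdist c x.
Proof.
move Hk : (size s) => k; elim: k s Hk c => [|k IH] [|a s] //= => [_|[Hk]] c.
  by exists c => // x _; rewrite /sqdist subrr dot0l dotvv_ge0.
have [p Kp p_min] := IH s Hk c.
have [ap|ap] := lerP 0 (dot a p).
  by exists p => [|x /dual_cone_cons[_ /p_min]] //; apply/dual_cone_cons.
have a0 : a != 0 by apply: contraTneq ap => ->; rewrite dot0l ltxx.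
pose P := proj_along a a.
have [q Kq q_min] := IH (map P s) (etrans (size_map _ _) Hk) (P c).
have Pq_orth : dot (P q) a = 0 by rewrite proj_along_orth ?dotvv_eq0.
have min_orth y : dual_cone s y -> dot y a = 0 -> sqdist c (P q) <= sqdist c y.
  move=> Ky ya0; rewrite !(sqdist_proj_orth c a0) // lerD2r.
  have Ky' : dual_cone (map P s) y.
    by move=> z /mapP[x sx ->]; rewrite dot_proj_along proj_along_id ?Ky.
  apply: le_trans (q_min y Ky'); rewrite sqdistC [leRHS]sqdistC.
  rewrite [leRHS](sqdist_proj_orth _ a0) ?proj_along_orth ?dotvv_eq0 //.
  by rewrite lerDl divr_ge0 ?sqr_ge0 ?dotvv_ge0.
exists (P q).
  apply/dual_cone_cons; split; first by rewrite dotC Pq_orth.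
  by move=> x sx; rewrite -dot_proj_along; apply/Kq/map_f.
move=> x /dual_cone_cons[ax Kx].
have [xa0|xa0] := eqVneq (dot a x) 0; first by apply: min_orth; rewrite // dotC.
have ax_gt0 : 0 < dot a x by rewrite lt_def xa0.
set t := dot a x / (dot a x - dot a p).
have den_gt0 : 0 < dot a x - dot a p by lra.
have t01 : 0 <= t <= 1.
  by apply/andP; split; [rewrite divr_ge0 ?ltW | rewrite ler_pdivrMr // mul1r; lra].
have ya0 : dot ((1 - t) *: x + t *: p) a = 0.
  by rewrite dotDl !dotZl (dotC x) (dotC p) /t; field; rewrite gt_eqF.
apply: le_trans (min_orth _ _ ya0) _.
  by case/andP: t01 => t0 t1; apply: dual_coneD; apply: dual_coneZ; rewrite ?subr_ge0.
apply: le_trans (sqdist_convex c x p t01) _.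
case/andP: t01 => t0 _; have := p_min x Kx; rewrite -subr_ge0 => /(mulr_ge0 t0); lra.
Qed.

Lemma conic_duality s c : (forall v, dual_cone s v -> dot c v <= norm2 v) ->
  exists2 w, conic_hull s w & norm2 (c + w) <= 1.
Proof.
move=> c_le; have [p Kp p_min] := exists_projection s c.
have polar x : dual_cone s x -> dot (c - p) x <= 0.
  move=> Kx; apply: projection_dot_le0 => t /andP[t0 _]; apply: p_min.
  by apply: dual_coneD => //; apply: dual_coneZ.
have cp_p : dot (c - p) (- p) <= 0.
  apply: projection_dot_le0 => t /andP[t0 t1]; apply: p_min.
  by rewrite scalerN -{1}[p]scale1r -scalerBl; apply: dual_coneZ; rewrite ?subr_ge0.
exists (p - c); first by apply: farkas => v Kv; rewrite -opprB dotNl oppr_ge0 polar.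
rewrite addrC subrK; move: cp_p; rewrite dotNr dotBl -sqr_norm2 oppr_le0 subr_ge0.
have := c_le p Kp; have := norm2_ge0 p; nra.
Qed.

End ConeProjection.

Section PolyhedralCones.
Variables (R : realType) (N d : nat).
Implicit Types (A : 'M[R]_(N, d)) (c u v w : 'cV[R]_d) (z : 'cV[R]_N).

Lemma mulmx_row_dot A v i : (A *m v) i 0 = dot (row i A)^T v.
Proof. by rewrite mxE; apply: eq_bigr => k _; rewrite !mxE. Qed.

Lemma dot_trmx_mul A z v : dot (A^T *m z) v = dot z (A *m v).
Proof.
rewrite /dot; under eq_bigr do rewrite mxE mulr_suml.
rewrite exchange_big /=; apply: eq_bigr => i _.
by rewrite mxE mulr_sumr; apply: eq_bigr => k _; rewrite !mxE; ring.
Qed.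

Definition rows A := [seq (row i A)^T | i <- enum 'I_N].

Lemma dual_cone_rows A v : dual_cone (rows A) v <-> mge0 (A *m v).
Proof.
split=> [Kv i j|Av a /mapP[i _ ->]].
  by rewrite (ord1 j) mulmx_row_dot; apply/Kv/map_f; rewrite mem_enum.
by rewrite -mulmx_row_dot.
Qed.

Lemma conic_hull_seq (T : finType) (f : T -> 'cV[R]_d) r w : uniq r ->
  conic_hull (map f r) w ->
  exists2 k : T -> R, (forall x, 0 <= k x) & w = \sum_(x <- r) k x *: f x.
Proof.
elim: r w => [|a r IH] w /=; first by move=> _ ->; exists (fun=> 0); rewrite ?big_nil.
case/andP=> ar ur [t t_ge0 /(IH _ ur)[k k_ge0 wE]].
exists (fun x => if x == a then t else k x) => [x|]; first by case: ifP.
rewrite big_cons eqxx (eq_big_seq (fun x => k x *: f x)) -?wE ?subrKC // => x rx.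
by case: eqP => // xa; rewrite -xa rx in ar.
Qed.

Lemma conic_hull_rows A w : conic_hull (rows A) w -> exists2 z, mge0 z & w = A^T *m z.
Proof.
move=> /(conic_hull_seq (enum_uniq _))[k k_ge0 ->]; exists (\col_i k i) => [i j|].
  by rewrite mxE.
apply/matrixP => l j; rewrite (ord1 j) summxE mxE big_enum /=.
by apply: eq_bigr => i _; rewrite !mxE mulrC.
Qed.

Lemma conic_duality_mx A c : (forall v, mge0 (A *m v) -> dot c v <= norm2 v) ->
  exists2 z, mge0 z & norm2 (c + A^T *m z) <= 1.
Proof.
move=> c_le; have c_dual v : dual_cone (rows A) v -> dot c v <= norm2 v.
  by move/dual_cone_rows; apply: c_le.
by have [w /conic_hull_rows[z z_ge0 ->]] := conic_duality c_dual; exists z.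
Qed.

Definition active_rows A u := \matrix_(i, k) (if (A *m u) i 0 == 0 then A i k else 0).

Lemma active_rowsE A u v i :
  (active_rows A u *m v) i 0 = if (A *m u) i 0 == 0 then (A *m v) i 0 else 0.
Proof.
rewrite [LHS]mxE; case: ifP => tight.
  by rewrite mxE; apply: eq_bigr => k _; rewrite mxE tight.
by rewrite big1 // => k _; rewrite mxE tight mul0r.
Qed.

(* Moving far enough along [u], which satisfies the inactive constraints
   strictly, makes any [v] feasible for the active ones also feasible for all. *)
Lemma active_cone_bound A c u : (forall v, mge0 (A *m v) -> dot c v <= norm2 v) ->
  mge0 (A *m u) -> dot c u = norm2 u ->
  forall v, mge0 (active_rows A u *m v) -> dot c v <= norm2 v.
Proof.
move=> c_le Au cu v Av.
pose slack i := if (A *m u) i 0 == 0 then 0 else `|(A *m v) i 0| / (A *m u) i 0.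
have slack_ge0 i : 0 <= slack i by rewrite /slack; case: ifP => // _; rewrite divr_ge0.
pose t := 1 + \sum_i slack i.
have t_ge0 : 0 <= t by rewrite addr_ge0 ?sumr_ge0.
have Atuv : mge0 (A *m (t *: u + v)).
  move=> i j; rewrite (ord1 j) mulmxDr -scalemxAr mxE [X in X + _]mxE.
  have := Av i 0; rewrite active_rowsE; case: eqP => [->|/eqP u_ne0 _].
    by rewrite mulr0 add0r.
  have Au_gt0 : 0 < (A *m u) i 0 by rewrite lt_def u_ne0 Au.
  have : slack i <= t.
    rewrite /t (bigD1 i) //=.
    have : 0 <= \sum_(k | k != i) slack k by apply: sumr_ge0.
    lra.
  rewrite {1}/slack (negPf u_ne0) ler_pdivrMr // => le_t.
  have := ler_norm (- (A *m v) i 0); rewrite normrN; lra.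
have := c_le _ Atuv; rewrite dotDr dotZr cu.
have := norm2D (t *: u) v; rewrite norm2Z ger0_norm //; lra.
Qed.

Lemma cone_KKT A c u : (forall v, mge0 (A *m v) -> dot c v <= norm2 v) ->
  mge0 (A *m u) -> dot c u = norm2 u ->
  exists z, [/\ mge0 z, (forall i, z i 0 * (A *m u) i 0 = 0) &
               subdiff (@norm2 R d) u (c + A^T *m z)].
Proof.
move=> c_le Au cu.
have [z z_ge0 g_le1] := conic_duality_mx (active_cone_bound c_le Au cu).
pose z' := \col_i (if (A *m u) i 0 == 0 then z i 0 else 0).
have zE : (active_rows A u)^T *m z = A^T *m z'.
  apply/matrixP => k j; rewrite (ord1 j) !mxE; apply: eq_bigr => i _; rewrite !mxE.
  by case: ifP; rewrite ?mul0r ?mulr0.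
have slack i : z' i 0 * (A *m u) i 0 = 0.
  by rewrite mxE; case: eqP => [->|_]; rewrite ?mulr0 ?mul0r.
exists z'; split => // [i j|]; first by rewrite (ord1 j) mxE; case: ifP.
apply: subdiff_norm2; first by rewrite -zE.
by rewrite dotDl dot_trmx_mul cu /dot big1 ?addr0.
Qed.

End PolyhedralCones.

Notation signmx D := (2%:R *: Dmx D - 1%:M).

Section ActivationPatterns.
Variables (R : realType) (N d : nat).
Implicit Types (X : 'M[R]_(N, d)) (u v : 'cV[R]_d) (lam : 'cV[R]_N) (D : {set 'I_N}).

Lemma Dmx_mulE D k (M : 'M[R]_(N, k)) i j :
  (Dmx D *m M) i j = (if i \in D then 1 else 0) * M i j.
Proof. by rewrite mul_diag_mx !mxE. Qed.

Lemma signmx_mulE D k (M : 'M[R]_(N, k)) i j :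
  (signmx D *m M) i j = (if i \in D then 1 else -1) * M i j.
Proof.
rewrite mulmxBl -scalemxAl mul1mx mxE [X in X + _]mxE [X in _ + X]mxE Dmx_mulE.
by case: (i \in D); ring.
Qed.

Lemma trDmx D : (Dmx D)^T = Dmx D :> 'M[R]_N.
Proof. exact: tr_diag_mx. Qed.

Lemma tr_signmx D : (signmx D)^T = signmx D :> 'M[R]_N.
Proof. by rewrite linearD /= linearZ /= trDmx linearN /= trmx1. Qed.

Lemma dot_trmx_sym X (M : 'M[R]_N) lam u : M^T = M ->
  dot (X^T *m M *m lam) u = dot lam (M *m X *m u).
Proof. by move=> M_sym; rewrite -{1}M_sym -trmx_mul dot_trmx_mul. Qed.

Lemma mulmx_trmx_dot (M : 'M[R]_N) X lam u :
  (lam^T *m M *m X *m u) 0 0 = dot lam (M *m X *m u).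
Proof. by rewrite -trmx_mul_dot !mulmxA. Qed.

Lemma Dmx_mul_relu D X u : mge0 (signmx D *m X *m u) -> Dmx D *m X *m u = relu (X *m u).
Proof.
move=> Su; apply/matrixP => i j; rewrite (ord1 j) -mulmxA Dmx_mulE /relu [RHS]mxE.
have := Su i 0; rewrite -mulmxA signmx_mulE.
by case: (i \in D) => Xu; [rewrite mul1r max_l | rewrite mul0r max_r] => //; lra.
Qed.

Lemma signmx_pattern_ge0 X u : mge0 (signmx (pattern X u) *m X *m u).
Proof.
move=> i j; rewrite (ord1 j) -mulmxA signmx_mulE inE.
by case: ifP => [|/negbT]; rewrite ?mul1r // -ltNge mulN1r oppr_ge0 => /ltW.
Qed.

Section PatternFamily.
Variables (p : nat) (X : 'M[R]_(N, d)) (Ds : 'I_p -> {set 'I_N}) (lam : 'cV[R]_N).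

Lemma dual_feasibleP :
  (forall D, (exists w, D = pattern X w) <-> (exists j, Ds j = D)) ->
  dual_feasible X lam <-> dual_feasible_patterns X Ds lam.
Proof.
move=> Ds_patterns; split=> [df j u u_le1 Su|dfp u u_le1].
  by rewrite mulmx_trmx_dot Dmx_mul_relu // -trmx_mul_dot; apply: df.
have [j Dsj] := (Ds_patterns (pattern X u)).1 (ex_intro _ u erefl).
have Su := signmx_pattern_ge0 X u; rewrite -Dsj in Su.
by have := dfp j u u_le1 Su; rewrite mulmx_trmx_dot Dmx_mul_relu // trmx_mul_dot.
Qed.

Lemma dual_feasible_patterns_le : dual_feasible_patterns X Ds lam ->
  forall j v, mge0 (signmx (Ds j) *m X *m v) -> `|dot lam (Dmx (Ds j) *m X *m v)| <= norm2 v.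
Proof.
move=> dfp j v Sv; have [->|v0] := eqVneq v 0; first by rewrite mulmx0 dot0r normr0 norm2_0.
have v_gt0 : 0 < norm2 v by rewrite lt_def norm2_eq0 v0 norm2_ge0.
have := dfp j ((norm2 v)^-1 *: v).
rewrite norm2Z ger0_norm ?invr_ge0 ?norm2_ge0 // mulVf ?gt_eqF // lexx mulmx_trmx_dot.
rewrite -!scalemxAr dotZr normrM ger0_norm ?invr_ge0 ?norm2_ge0 // mulrC ler_pdivrMr // mul1r.
by apply=> // i k; rewrite mxE mulr_ge0 ?invr_ge0 ?norm2_ge0 ?Sv.
Qed.

Lemma convex_KKT_dual_feasible_patterns (y : 'cV[R]_N) (u u' : 'I_p -> 'cV[R]_d)
    (z z' : 'I_p -> 'cV[R]_N) :
  convex_KKT X y Ds lam u u' z z' -> dual_feasible_patterns X Ds lam.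
Proof.
case=> [[_ _ _ _ z_ge0] [u'_sub u_sub _ _]] j v v_le1 Sv.
have Sz w : mge0 w -> 0 <= dot w (signmx (Ds j) *m X *m v).
  by move=> w_ge0; apply: sumr_ge0 => i _; rewrite mulr_ge0 ?w_ge0 ?Sv.
have := subdiff_norm2_le (u'_sub j) v; have := subdiff_norm2_le (u_sub j) v.
rewrite !dotDl dotNl !dot_trmx_sym ?trDmx ?tr_signmx //.
have := Sz _ (z_ge0 j).1; have := Sz _ (z_ge0 j).2.
rewrite mulmx_trmx_dot ler_norml; lra.
Qed.

End PatternFamily.
End ActivationPatterns.

Lemma maxr0_mul_norm (R : realDomainType) (x : R) : Num.max x 0 * x = Num.max x 0 * `|x|.
Proof. by case: ger0P; rewrite ?mul0r. Qed.

Lemma maxr0_subN (R : realDomainType) (x : R) : Num.max x 0 - Num.max (- x) 0 = x.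
Proof. by case: (ger0P x) => ?; case: (ger0P (- x)) => ?; lra. Qed.

Lemma mulmx_col (R : pzSemiRingType) k l m (A : 'M[R]_(k, l)) (B : 'M[R]_(l, m)) i :
  A *m col i B = col i (A *m B).
Proof. by rewrite !colE mulmxA. Qed.

Section NonconvexToConvex.
Variables (R : realType) (N d m p : nat) (X : 'M[R]_(N, d)) (y : 'cV[R]_N).
Variables (Ds : 'I_p -> {set 'I_N}) (W1 : 'M[R]_(d, m)) (w2 : 'cV[R]_m) (lam : 'cV[R]_N).
Hypothesis KKT : nonconvex_KKT X y W1 w2 lam.
Variable pat : 'I_m -> 'I_p.
Hypothesis patP : forall i, Ds (pat i) = pattern X (col i W1).

Lemma neuron_output i : dot lam (col i (relu (X *m W1))) = w2 i 0.
Proof.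
by case: KKT => _ _ _ -> _; rewrite mxE; apply: eq_bigr => n _; rewrite !mxE mulrC.
Qed.

Lemma norm2_neuron i : norm2 (col i W1) = `|w2 i 0|.
Proof.
case: KKT => _ _ _ _ [g [gP W1E]].
suff : dot (col i W1) (col i W1) = w2 i 0 ^+ 2 by rewrite norm2E => ->; rewrite sqrtr_sqr.
rewrite {1}W1E dotZl dot_suml expr2 -neuron_output; congr (_ * _).
apply: eq_bigr => n _; rewrite dotZl -mulmx_row_dot mulmx_col.
move: (X *m W1) gP => M /(_ n i)[_ g1 g0]; rewrite /relu !mxE -mulrA; congr (_ * _).
by case: (ltrgt0P (M n i)) => [/g1->|/g0->|->]; rewrite ?mul1r ?mul0r ?mulr0.
Qed.

Lemma signmx_neuron_ge0 i : mge0 (signmx (Ds (pat i)) *m X *m col i W1).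
Proof. by rewrite patP; apply: signmx_pattern_ge0. Qed.

Lemma Dmx_neuron i : Dmx (Ds (pat i)) *m X *m col i W1 = col i (relu (X *m W1)).
Proof.
rewrite Dmx_mul_relu; last exact: signmx_neuron_ge0.
by rewrite mulmx_col; apply: map_col.
Qed.

Definition neuron_sum (k : 'I_m -> R) j := \sum_(i | pat i == j) k i *: col i W1.

Lemma neuron_sum_cone k j : (forall i, 0 <= k i) ->
  mge0 (signmx (Ds j) *m X *m neuron_sum k j).
Proof.
move=> k_ge0 n l; rewrite mulmx_sumr summxE; apply: sumr_ge0 => i /eqP <-.
by rewrite -scalemxAr mxE mulr_ge0 ?signmx_neuron_ge0.
Qed.

Definition neuron_part (sg : R) i := Num.max (sg * w2 i 0) 0.

Lemma neuron_part_ge0 sg i : 0 <= neuron_part sg i.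
Proof. by rewrite le_max lexx orbT. Qed.

Hypothesis dual : dual_feasible_patterns X Ds lam.

Lemma neuron_sum_stationary sg j : `|sg| = 1 ->
  exists z, [/\ mge0 z,
    (forall n, z n 0 * (signmx (Ds j) *m X *m neuron_sum (neuron_part sg) j) n 0 = 0) &
    subdiff (@norm2 R d) (neuron_sum (neuron_part sg) j)
      (sg *: (X^T *m Dmx (Ds j) *m lam) + X^T *m signmx (Ds j) *m z)].
Proof.
move=> sg1; set c := sg *: _.
have cE v : dot c v = sg * dot lam (Dmx (Ds j) *m X *m v).
  by rewrite dotZl dot_trmx_sym ?trDmx.
have c_le v : mge0 (signmx (Ds j) *m X *m v) -> dot c v <= norm2 v.
  move=> Sv; rewrite cE; apply: le_trans (ler_norm _) _.
  by rewrite normrM sg1 mul1r dual_feasible_patterns_le.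
have [|z [z_ge0 slack sub]] := cone_KKT c_le (neuron_sum_cone _ (neuron_part_ge0 sg)).
  apply: dot_sum_eq_norm2 => [|i /eqP ij]; first by apply/c_le/neuron_sum_cone/neuron_part_ge0.
  rewrite cE -ij -scalemxAr dotZr Dmx_neuron neuron_output norm2Z norm2_neuron.
  by rewrite ger0_norm ?neuron_part_ge0 // mulrCA maxr0_mul_norm normrM sg1 mul1r.
by exists z; split => //; rewrite trmx_mul tr_signmx in sub.
Qed.

Lemma neuron_sum_output :
  \sum_(j < p) Dmx (Ds j) *m X *m (neuron_sum (neuron_part 1) j - neuron_sum (neuron_part (-1)) j)
  = relu (X *m W1) *m w2.
Proof.
have -> : relu (X *m W1) *m w2 = \sum_i w2 i 0 *: col i (relu (X *m W1)).
  apply/matrixP => n l; rewrite (ord1 l) mxE summxE; apply: eq_bigr => i _.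
  by rewrite !mxE mulrC.
rewrite [RHS](partition_big pat xpredT) //=; apply: eq_bigr => j _.
rewrite -sumrB mulmx_sumr; apply: eq_bigr => i /eqP <-.
by rewrite -scalerBl /neuron_part mul1r mulN1r maxr0_subN -scalemxAr Dmx_neuron.
Qed.

Lemma convex_KKT_of_nonconvex :
  exists (u u' : 'I_p -> 'cV[R]_d) (z z' : 'I_p -> 'cV[R]_N),
    \sum_(j < p) Dmx (Ds j) *m X *m (u' j - u j) = relu (X *m W1) *m w2
    /\ convex_KKT X y Ds lam u u' z z'.
Proof.
have [z' z'P] := fin_all_exists (fun j => neuron_sum_stationary j (normr1 R)).
have [z zP] := fin_all_exists (fun j => neuron_sum_stationary j (normrN1 R)).
exists (neuron_sum (neuron_part (-1))), (neuron_sum (neuron_part 1)), z, z'.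
case: KKT => Ylam_ge0 margin cslack _ _; rewrite /convex_KKT neuron_sum_output.
split=> //; split; split=> //.
- by move=> j; apply/neuron_sum_cone/neuron_part_ge0.
- by move=> j; apply/neuron_sum_cone/neuron_part_ge0.
- by move=> j; have [? _ _] := zP j; have [? _ _] := z'P j.
- by move=> j; have [_ _] := z'P j; rewrite scale1r.
- by move=> j; have [_ _] := zP j; rewrite scaleN1r.
- by move=> j n; have [_ ? _] := zP j; have [_ ? _] := z'P j.
Qed.

End NonconvexToConvex.

Theorem theorem3 (R : realType) (N d m p : nat)
    (X : 'M[R]_(N, d)) (y : 'cV[R]_N)
    (Ds : 'I_p -> {set 'I_N})
    (W1 : 'M[R]_(d, m)) (w2 : 'cV[R]_m) (lam : 'cV[R]_N) :
  (forall n, y n 0 = 1 \/ y n 0 = -1) ->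
  injective Ds ->
  (forall D : {set 'I_N}, (exists w : 'cV[R]_d, D = pattern X w) <-> (exists j, Ds j = D)) ->
  nonconvex_KKT X y W1 w2 lam ->
  ((exists (u u' : 'I_p -> 'cV[R]_d) (z z' : 'I_p -> 'cV[R]_N),
       \sum_(j < p) Dmx (Ds j) *m X *m (u' j - u j) = relu (X *m W1) *m w2
       /\ convex_KKT X y Ds lam u u' z z')
     <-> dual_feasible X lam)
  /\ (dual_feasible X lam <-> dual_feasible_patterns X Ds lam).
Proof.
move=> _ _ Ds_patterns KKT; have dfP := dual_feasibleP lam Ds_patterns.
split=> //; split=> [[u [u' [z [z' [_ cKKT]]]]]|/dfP dfp].
  by apply/dfP; apply: convex_KKT_dual_feasible_patterns cKKT.
have pat_ex i : exists j, Ds j = pattern X (col i W1) by apply/Ds_patterns; exists (col i W1).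
have [pat patP] := fin_all_exists pat_ex.
exact: (convex_KKT_of_nonconvex KKT patP dfp).
Qed.
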